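(* Let $n\ge 4$ and let $G$ be a graph having the maximum value of $cM_2$ among all connected graphs of order $n$. Then the maximum degree of $G$ is $n-1$.
   Context: All graphs are finite and simple. For a graph $G$ and a vertex $u$, $d_u(G)$ denotes the degree of $u$ in $G$. The complementary second Zagreb index of $G$ is $cM_2(G)=\sum_{uv\in E(G)}\left|(d_u(G))^2-(d_v(G))^2\right|$. *)

From mathcomp Require Import all_boot.
Set Implicit Arguments. Unset Strict Implicit. Unset Printing Implicit Defensive.

Record sgraph (n : nat) := SGraph {
  adj : rel 'I_n;
  adj_sym : symmetric adj;
  adj_irr : irreflexive adj }.

Definition deg n (G : sgraph n) (u : 'I_n) : nat := #|[set v | adj G u v]|.

Definition connected_graph n (G : sgraph n) : Prop :=
  forall u v : 'I_n, connect (adj G) u v.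

(* complementary second Zagreb index: sum over edges uv (each unordered edge
   counted once, via u < v) of |d_u^2 - d_v^2| (written max - min on nat) *)
Definition cM2 n (G : sgraph n) : nat :=
  \sum_(u : 'I_n) \sum_(v : 'I_n | (u < v) && adj G u v)
     (maxn (deg G u ^ 2) (deg G v ^ 2) - minn (deg G u ^ 2) (deg G v ^ 2)).

Definition maxdeg n (G : sgraph n) : nat := \max_(u : 'I_n) deg G u.

From mathcomp Require Import all_boot zify.
Set Implicit Arguments. Unset Strict Implicit. Unset Printing Implicit Defensive.

(* Suppose a vertex u of maximum degree D had a non-neighbour w, of degree
   dw <= D, and add the edge uw. Every neighbour y of u has degree at most D,
   so each of the D terms |d_u^2 - d_y^2| grows by exactly (D+1)^2 - D^2 = 2D+1.
   Each of the dw terms at w shrinks by at most 2dw+1, and only when some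
   neighbour of w has larger degree, which forces dw < D. Connectivity gives
   D >= 1, so dw * [dw < D] * (2dw+1) < D(2D+1) and cM2 strictly increases. *)

Definition sq_dist (a b : nat) : nat := maxn (a ^ 2) (b ^ 2) - minn (a ^ 2) (b ^ 2).

Lemma sq_dist_sym a b : sq_dist a b = sq_dist b a.
Proof. by rewrite /sq_dist maxnC minnC. Qed.

Lemma sq_dist_succl a b : b <= a -> sq_dist a.+1 b = sq_dist a b + (2 * a + 1).
Proof. rewrite /sq_dist; nia. Qed.

Lemma sq_dist_succl_lb a b c : b <= c ->
  sq_dist a b <= sq_dist a.+1 b + (a < c) * (2 * a + 1).
Proof. rewrite /sq_dist; case: (ltnP a c) => /=; nia. Qed.

Section Degrees.
Variables (n : nat) (G : sgraph n).

Lemma deg_le_pred u : deg G u <= n.-1.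
Proof.
rewrite -[n in n.-1]card_ord -(cardsC1 u); apply: subset_leq_card.
by apply/subsetP => v; rewrite !inE; apply: contraTneq => ->; rewrite adj_irr.
Qed.

Lemma nonneighbour_of_deg_lt u : deg G u < n.-1 -> exists2 w, w != u & ~~ adj G u w.
Proof.
rewrite -[n in n.-1]card_ord -(cardsC1 u) => lt_deg.
have /subsetPn [w] : ~~ ([set~ u] \subset [set v | adj G u v]).
  by apply: contraTN lt_deg => /subset_leq_card; rewrite leqNgt.
by rewrite !inE => wu nuw; exists w.
Qed.

Lemma connected_deg_gt0 u w : connected_graph G -> u != w -> 0 < deg G u.
Proof.
move=> cG; case/connectP: (cG u w) => [[|y p] /= uyp -> //].
  by rewrite eqxx.
by case/andP: uyp => uy _ _; rewrite card_gt0; apply/set0Pn; exists y; rewrite inE.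
Qed.

Lemma sum_adj x k : \sum_y (if adj G x y then k else 0) = deg G x * k.
Proof.
by rewrite -sum_nat_const [RHS]big_mkcond; apply: eq_bigr => y _; rewrite inE.
Qed.

Definition pair_term (x y : 'I_n) : nat :=
  if adj G x y then sq_dist (deg G x) (deg G y) else 0.

Lemma pair_term_sym x y : pair_term x y = pair_term y x.
Proof. by rewrite /pair_term adj_sym sq_dist_sym. Qed.

Lemma cM2_double : 2 * cM2 G = \sum_x \sum_y pair_term x y.
Proof.
pose half (b : 'I_n -> 'I_n -> bool) := \sum_x \sum_y (if b x y then pair_term x y else 0).
have cM2E : cM2 G = half (fun x y => x < y).
  apply: eq_bigr => x _; rewrite big_mkcond; apply: eq_bigr => y _.
  by rewrite /pair_term; case: (x < y); case: (adj G x y).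
have halfC : half (fun x y => y < x) = half (fun x y => x < y).
  rewrite /half exchange_big; apply: eq_bigr => x _; apply: eq_bigr => y _.
  by rewrite pair_term_sym.
rewrite mul2n -addnn {1}cM2E -halfC cM2E /half -big_split; apply: eq_bigr => x _.
rewrite -big_split; apply: eq_bigr => y _ /=.
case: ltngtP => [||/val_inj ->]; rewrite ?addn0 //.
by rewrite /pair_term adj_irr.
Qed.

Definition incident_weight (v : 'I_n) (k : nat) (x y : 'I_n) : nat :=
  if adj G x y && ((x == v) || (y == v)) then k else 0.

Lemma incident_weight_sym v k x y : incident_weight v k x y = incident_weight v k y x.
Proof. by rewrite /incident_weight adj_sym orbC. Qed.

Lemma sum_incident_weight v k :
  \sum_x \sum_y incident_weight v k x y = 2 * (deg G v * k).
Proof.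
have rowE x : \sum_y incident_weight v k x y =
    (if x == v then deg G v * k else 0) + (if adj G v x then k else 0).
  rewrite /incident_weight; case: eqVneq => [->|xv].
    by rewrite adj_irr addn0 -sum_adj; apply: eq_bigr => y _; rewrite orTb andbT.
  rewrite add0n (bigD1 v) //= eqxx andbT adj_sym big1 ?addn0 // => y /negbTE yv.
  by rewrite yv andbF.
rewrite (eq_bigr _ (fun x _ => rowE x)) big_split /= sum_adj mul2n -addnn.
by rewrite -big_mkcond big_pred1_eq.
Qed.

End Degrees.

Section AddEdge.
Variables (n : nat) (G : sgraph n) (u w : 'I_n).
Hypothesis uw : u != w.

Definition add_edge_rel (x y : 'I_n) : bool :=
  adj G x y || ((x == u) && (y == w)) || ((x == w) && (y == u)).

Lemma add_edge_rel_sym : symmetric add_edge_rel.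
Proof.
move=> x y; rewrite /add_edge_rel adj_sym -!orbA; congr (_ || _).
by rewrite orbC; congr (_ || _); apply: andbC.
Qed.

Lemma add_edge_rel_irr : irreflexive add_edge_rel.
Proof.
move=> x; rewrite /add_edge_rel adj_irr /=.
by apply/negP => /orP [] /andP [/eqP e1 /eqP e2]; move: uw; rewrite -e1 -e2 eqxx.
Qed.

Definition add_edge : sgraph n := SGraph add_edge_rel_sym add_edge_rel_irr.

Lemma add_edge_connected : connected_graph G -> connected_graph add_edge.
Proof.
move=> cG x y; apply: connect_sub (cG x y) => a b ab.
by apply: connect1; rewrite /= /add_edge_rel ab.
Qed.

Lemma adj_add_edge_other x y : x != u -> x != w -> adj add_edge x y = adj G x y.
Proof. by move=> /negbTE xu /negbTE xw; rewrite /= /add_edge_rel xu xw !orbF. Qed.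

Lemma deg_add_edge_other x : x != u -> x != w -> deg add_edge x = deg G x.
Proof.
by move=> xu xw; apply: eq_card => y; rewrite !inE adj_add_edge_other.
Qed.

Hypothesis nadj : ~~ adj G u w.

Lemma adj_add_edge_l y : adj add_edge u y = adj G u y || (y == w).
Proof. by rewrite /= /add_edge_rel eqxx eq_sym (negbTE uw) orbF. Qed.

Lemma adj_add_edge_r y : adj add_edge w y = adj G w y || (y == u).
Proof. by rewrite /= /add_edge_rel eqxx [w == u]eq_sym (negbTE uw) /= orbF. Qed.

Lemma deg_add_edge_l : deg add_edge u = (deg G u).+1.
Proof.
rewrite /deg (_ : [set v | _] = w |: [set v | adj G u v]).
  by rewrite cardsU1 inE (negbTE nadj).
by apply/setP => v; rewrite !inE adj_add_edge_l orbC.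
Qed.

Lemma deg_add_edge_r : deg add_edge w = (deg G w).+1.
Proof.
rewrite /deg (_ : [set v | _] = u |: [set v | adj G w v]).
  by rewrite cardsU1 inE adj_sym (negbTE nadj).
by apply/setP => v; rewrite !inE adj_add_edge_r orbC.
Qed.

Hypothesis u_maxdeg : forall x, deg G x <= deg G u.

Let D := deg G u.
Let dw := deg G w.
Let gain := incident_weight G u (2 * D + 1).
Let loss := incident_weight G w ((dw < D) * (2 * dw + 1)).

Lemma pair_term_add_edge_u y :
  pair_term G u y + gain u y <= pair_term add_edge u y + loss u y.
Proof.
rewrite /gain /loss /incident_weight /pair_term adj_add_edge_l eqxx (negbTE uw) /=.
case: (eqVneq y w) => [->|yw]; first by rewrite (negbTE nadj).
rewrite orbF andbT andbF addn0 deg_add_edge_l.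
case: ifP => // uy; have yu : y != u by apply: contraTneq uy => ->; rewrite adj_irr.
by rewrite deg_add_edge_other // sq_dist_succl ?u_maxdeg.
Qed.

Lemma pair_term_add_edge_w y :
  pair_term G w y + gain w y <= pair_term add_edge w y + loss w y.
Proof.
rewrite /gain /loss /incident_weight /pair_term adj_add_edge_r eqxx eq_sym (negbTE uw) /=.
case: (eqVneq y u) => [->|yu]; first by rewrite adj_sym (negbTE nadj).
rewrite orbF andbT andbF addn0 deg_add_edge_r.
case: ifP => // wy; have yw : y != w by apply: contraTneq wy => ->; rewrite adj_irr.
by rewrite deg_add_edge_other // sq_dist_succl_lb ?u_maxdeg.
Qed.

Lemma pair_term_add_edge x y :
  pair_term G x y + gain x y <= pair_term add_edge x y + loss x y.
Proof.
wlog xuw : x y / (x == u) || (x == w) || (y != u) && (y != w).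
  move=> sym_case; case: (boolP ((x == u) || (x == w) || (y != u) && (y != w))).
    exact: sym_case.
  rewrite !negb_or negb_and !negbK => /andP [_ yuw].
  rewrite [pair_term G x y]pair_term_sym [pair_term add_edge x y]pair_term_sym.
  by rewrite /gain /loss !(incident_weight_sym _ _ _ x y) sym_case // yuw.
case/orP: xuw => [/orP [/eqP -> | /eqP ->] | /andP [yu yw]].
- exact: pair_term_add_edge_u.
- exact: pair_term_add_edge_w.
case: (eqVneq x u) => [-> | xu]; first exact: pair_term_add_edge_u.
case: (eqVneq x w) => [-> | xw]; first exact: pair_term_add_edge_w.
rewrite /gain /loss /incident_weight /pair_term adj_add_edge_other //.
by rewrite !deg_add_edge_other // (negbTE xu) (negbTE xw) (negbTE yu) (negbTE yw) !andbF.
Qed.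

Lemma cM2_add_edge_gt : 0 < D -> cM2 G < cM2 add_edge.
Proof.
move=> D_gt0.
have : \sum_x \sum_y pair_term G x y + \sum_x \sum_y gain x y
    <= \sum_x \sum_y pair_term add_edge x y + \sum_x \sum_y loss x y.
  rewrite -!big_split; apply: leq_sum => x _.
  by rewrite -!big_split; apply: leq_sum => y _; apply: pair_term_add_edge.
rewrite -!cM2_double /gain /loss !sum_incident_weight.
have : dw <= D by apply: u_maxdeg.
by case: (ltnP dw D) => /=; nia.
Qed.

End AddEdge.

Lemma maxdeg_attained n (G : sgraph n) : 0 < n ->
  exists2 u, maxdeg G = deg G u & forall x, deg G x <= deg G u.
Proof.
rewrite -[n in 0 < n]card_ord => n_gt0; have [u maxE] := eq_bigmax (deg G) n_gt0.
by exists u => // x; rewrite -maxE; apply: leq_bigmax.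
Qed.

Theorem proposition1 (n : nat) (G : sgraph n) :
  4 <= n ->
  connected_graph G ->
  (forall H : sgraph n, connected_graph H -> cM2 H <= cM2 G) ->
  maxdeg G = n.-1.
Proof.
move=> n_ge4 cG cM2_max.
have [u -> u_maxdeg] := maxdeg_attained G (leq_trans (isT : 0 < 4) n_ge4).
apply/eqP; rewrite eqn_leq deg_le_pred leqNgt; apply/negP.
case/nonneighbour_of_deg_lt => w; rewrite eq_sym => uw nadj.
have := cM2_max _ (add_edge_connected uw cG).
by rewrite leqNgt cM2_add_edge_gt // (connected_deg_gt0 cG uw).
Qed.
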